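(* Consider computing $\mathbf{r}=\mathbf{s}\mathbf{A}$ over $\mathbb{F}_2$ ($\mathbf A$ an $L\times K$ binary matrix) with AND, XOR and majority gates from Gate Model II with fan-in bound $D>3$ and defective fractions $\alpha_{\text{and}},\alpha_{\text{xor}},\alpha_{\text{maj}}$ respectively, using the ENCODED-F scheme with group size $d_s\le D$ and a $(d_v,d_c)$-regular LDPC code (length $N$, dimension $K$, $P=N-K$ parity checks, rate $R=\frac{N-P}{N}$, $d_c\le D$) that satisfies (A.3) with constants $\alpha_0,\theta\in(0,1)$. If $$(d_s-1)\alpha_{\text{and}}+[D(1-R)+1]\alpha_{\text{xor}}+\alpha_{\text{maj}}<\theta\alpha_0,$$ then $\mathbf r=\mathbf s\mathbf A$ can be computed using $N$ AND gates, $N+P$ XOR gates and $N$ majority gates, with at most $\frac{2N+P}{K}\lceil\frac{L}{d_s-1}\rceil+\frac{NL}{K}=\Theta(\frac{LN}{K})$ operations per output bit, and, for every input $\mathbf s$ and every placement of defective gates consistent with the fractions above, the error fraction of the final output is at most $\alpha_0$.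
   Context: Gate Model II: among a set of $n$ gates of a given type, each is either perfect, always outputting $g(u_1,\dots,u_{d_g})$ with $d_g\le D$, or defective, always outputting $f(g(u_1,\dots,u_{d_g}))$ for a fixed $f$ which is NOT, constant $0$, or constant $1$; the fraction of defective gates of type $i$ is $\alpha_i$; which gates are defective is unknown (worst case). Registers and wires are noiseless. Operations per output bit = total number of gate activations divided by $K$. Condition (A.3): for every pattern of at most $\alpha_0N$ erroneous bits in a word, one noiseless iteration of the parallel bit flipping (PBF) algorithm leaves at most $(1-\theta)\alpha_0N$ erroneous bits. One PBF iteration: compute all parity checks; flip each variable bit connected to more than $d_v/2$ unsatisfied checks; set each variable bit connected to exactly $d_v/2$ unsatisfied checks to a uniformly random bit. ENCODED-F: let $\mathbf G$ be a systematic $K\times N$ generator matrix of the code and precompute noiselessly $\tilde{\mathbf G}=\mathbf A\mathbf G$ with rows $\tilde{\mathbf g}_1,\dots,\tilde{\mathbf g}_L$. An $N$-bit register starts at zero. In stage $l=1,\dots,\lceil L/(d_s-1)\rceil$: compute $s_i\tilde{\mathbf g}_i$ for the $d_s-1$ indices $i\in\{(d_s-1)(l-1)+1,\dots,(d_s-1)l\}$ with AND gates, add them to the register with $N$ XOR gates (fan-in $d_s$), then perform one iteration of PBF decoding on the register using $P$ XOR gates (fan-in $d_c$, computing the parity checks) and $N$ majority gates (fan-in $d_v$, deciding flips). The final register contents are the output, compared with the correct codeword $\mathbf s\tilde{\mathbf G}=\mathbf r\mathbf G$; the error fraction is the fraction of its $N$ bits that are wrong. *)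

From HB Require Import structures.
From mathcomp Require Import all_boot all_order all_algebra.
Set Implicit Arguments. Unset Strict Implicit. Unset Printing Implicit Defensive.
Import Order.TTheory GRing.Theory Num.Theory.
Local Open Scope ring_scope.

Notation F2 := 'F_2.

Definition valid_defect (f : F2 -> F2) : Prop :=
  f = (fun x => x + 1) \/ f = (fun _ => 0) \/ f = (fun _ => 1).

Definition gate_out (T : finType) (Def : {set T}) (f : F2 -> F2) (g : T) (v : F2) : F2 :=
  if g \in Def then f v else v.

(* Majority gate of fan-in dv fed with u ones (u = number of unsatisfied checks):
   decides "flip" (1) if more than dv/2 inputs are 1, "no flip" (0) if fewer,
   and outputs the tie-break bit r on ties.  New bit = old bit + decision, so
   on ties the new bit is old + r (a uniformly random bit when r is). *)
Definition maj_dec (dv u : nat) (r : F2) : F2 :=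
  if (dv < u.*2)%N then 1 else if u.*2 == dv then r else 0.

Definition adj (P N : nat) (H : 'M[F2]_(P, N)) (c : 'I_P) (v : 'I_N) : bool := H c v != 0.

Definition check_val (P N : nat) (H : 'M[F2]_(P, N)) (Dchk : {set 'I_P}) (fx : F2 -> F2)
  (x : 'rV[F2]_N) (c : 'I_P) : F2 :=
  gate_out Dchk fx c (\sum_(v : 'I_N | adj H c v) x 0 v).

Definition pbf_step (P N : nat) (H : 'M[F2]_(P, N)) (dv : nat)
  (Dchk : {set 'I_P}) (fx : F2 -> F2) (Dmaj : {set 'I_N}) (fm : F2 -> F2)
  (r : 'I_N -> F2) (x : 'rV[F2]_N) : 'rV[F2]_N :=
  \row_v (x 0 v + gate_out Dmaj fm v
      (maj_dec dv #|[set c : 'I_P | adj H c v && (check_val H Dchk fx x c != 0)]| (r v))).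

Definition pbf_noiseless (P N : nat) (H : 'M[F2]_(P, N)) (dv : nat)
  (r : 'I_N -> F2) (x : 'rV[F2]_N) : 'rV[F2]_N :=
  pbf_step H dv set0 id set0 id r x.

Definition hdist (N : nat) (x y : 'rV[F2]_N) : nat := #|[set v : 'I_N | x 0 v != y 0 v]|.

Definition regular_ldpc (P N : nat) (H : 'M[F2]_(P, N)) (dv dc : nat) : Prop :=
  (forall v : 'I_N, #|[set c : 'I_P | adj H c v]| = dv) /\
  (forall c : 'I_P, #|[set v : 'I_N | adj H c v]| = dc).

Definition codeword (P N : nat) (H : 'M[F2]_(P, N)) (c : 'rV[F2]_N) : Prop :=
  c *m H^T = 0.

Definition generator_of (K P N : nat) (H : 'M[F2]_(P, N)) (G : 'M[F2]_(K, N)) : Prop :=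
  row_free G /\ G *m H^T = 0 /\ (forall c : 'rV[F2]_N, codeword H c -> (c <= G)%MS).

Definition systematic (K N : nat) (G : 'M[F2]_(K, N)) : Prop :=
  exists sigma : 'I_K -> 'I_N, injective sigma /\
    forall i j : 'I_K, G i (sigma j) = (i == j)%:R.

(* Condition (A.3), for every outcome of the random tie-breaking bits. *)
Definition cond_A3 (R : realFieldType) (P N : nat) (H : 'M[F2]_(P, N)) (dv : nat)
  (alpha0 theta : R) : Prop :=
  forall c e : 'rV[F2]_N, codeword H c ->
    (#|[set v : 'I_N | e 0 v != 0]|%:R <= alpha0 * N%:R) ->
    forall r : 'I_N -> F2,
      (hdist (pbf_noiseless H dv r (c + e)) c)%:R <= (1 - theta) * alpha0 * N%:R.

(* Number of stages ceil(L / (d_s - 1)) (d_s >= 2). *)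
Definition nstages (L ds : nat) : nat := ((L + ds.-2) %/ ds.-1)%N.

Definition in_stage (L ds l : nat) (i : 'I_L) : bool :=
  (ds.-1 * l <= i < ds.-1 * l.+1)%N.

Definition add_step (L K N : nat) (ds : nat) (A : 'M[F2]_(L, K)) (G : 'M[F2]_(K, N))
  (s : 'rV[F2]_L) (Dand : {set 'I_N}) (fa : F2 -> F2) (Dadd : {set 'I_N}) (fx : F2 -> F2)
  (l : nat) (x : 'rV[F2]_N) : 'rV[F2]_N :=
  \row_j gate_out Dadd fx j
     (x 0 j + \sum_(i : 'I_L | in_stage ds l i) gate_out Dand fa j (s 0 i * (A *m G) i j)).

Fixpoint encodedF_reg (L K P N : nat) (ds dv : nat) (A : 'M[F2]_(L, K)) (G : 'M[F2]_(K, N))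
  (H : 'M[F2]_(P, N)) (s : 'rV[F2]_L)
  (Dand : {set 'I_N}) (fa : F2 -> F2) (Dadd : {set 'I_N}) (Dchk : {set 'I_P})
  (fx : F2 -> F2) (Dmaj : {set 'I_N}) (fm : F2 -> F2) (r : nat -> 'I_N -> F2)
  (n : nat) : 'rV[F2]_N :=
  match n with
  | 0 => 0
  | n'.+1 =>
      pbf_step H dv Dchk fx Dmaj fm (r n')
        (add_step ds A G s Dand fa Dadd fx n'
           (encodedF_reg ds dv A G H s Dand fa Dadd Dchk fx Dmaj fm r n'))
  end.

Definition encodedF_output (L K P N : nat) (ds dv : nat) (A : 'M[F2]_(L, K)) (G : 'M[F2]_(K, N))
  (H : 'M[F2]_(P, N)) (s : 'rV[F2]_L)
  (Dand : {set 'I_N}) (fa : F2 -> F2) (Dadd : {set 'I_N}) (Dchk : {set 'I_P})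
  (fx : F2 -> F2) (Dmaj : {set 'I_N}) (fm : F2 -> F2) (r : nat -> 'I_N -> F2) : 'rV[F2]_N :=
  encodedF_reg ds dv A G H s Dand fa Dadd Dchk fx Dmaj fm r (nstages L ds).

(* Total number of gate activations of ENCODED-F: in stage l, one activation of
   each of the N AND gates per index of the stage, N adder XORs, P check XORs and
   N majority gates. *)
Definition encodedF_activations (L N P ds : nat) : nat :=
  (\sum_(l < nstages L ds) (N * #|[set i : 'I_L | in_stage ds l i]| + N + P + N))%N.

From HB Require Import structures.
From mathcomp Require Import all_boot all_order all_algebra.
From mathcomp Require Import zify ring lra.
Set Implicit Arguments. Unset Strict Implicit. Unset Printing Implicit Defensive.
Import Order.TTheory GRing.Theory Num.Theory.

(* Let c_n be the codeword (s restricted to its first (d_s-1)n entries) A G.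
   After stage n the register stays within (1-theta) alpha0 N + |Dmaj| + d_c |Dchk|
   of c_n: the addition step moves it to c_(n+1) up to |Dand| + |Dadd| new errors,
   which keeps it within alpha0 N, so by (A.3) a noiseless PBF iteration brings it
   back to (1-theta) alpha0 N; a defective majority gate spoils one bit and a
   defective check can only mislead its d_c neighbours.  Since
   d_c |Dchk| <= D (1-R) N alpha_xor, the hypothesis on the defect fractions
   keeps the total defect budget below theta alpha0 N. *)

Lemma card_set_sum (T : finType) (P : pred T) :
  #|[set x | P x]| = (\sum_x (P x : nat))%N.
Proof. by rewrite -sum1dep_card big_mkcond; apply: eq_bigr => x _; case: (P x). Qed.

Lemma card_bigcup_le (I T : finType) (S : {set I}) (F : I -> {set T}) :
  (#|\bigcup_(i in S) F i| <= \sum_(i in S) #|F i|)%N.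
Proof.
elim/big_rec2: _ => [|i B n _ IH]; first by rewrite cards0.
exact: leq_trans (leq_card_setU _ _) (leq_add _ IH).
Qed.

Lemma sum_ord_eq_le1 n k : (\sum_(l < n) (nat_of_ord l == k : nat) <= 1)%N.
Proof.
elim: n => [|n IH]; first by rewrite big_ord0.
rewrite big_ord_recr /=; case: (eqVneq n k) => [<- | _]; last by rewrite addn0.
rewrite big1 // => l _; by rewrite ltn_eqF.
Qed.

Lemma in_stageE L ds l (i : 'I_L) : (1 < ds)%N -> in_stage ds l i = (l == i %/ ds.-1)%N.
Proof.
move=> ds_gt1; have ds1_gt0 : (0 < ds.-1)%N by rewrite -ltnS prednK // ltnW.
rewrite /in_stage eqn_leq leq_divRL // -[(i %/ _ <= l)%N]ltnS ltn_divLR //.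
by rewrite ![(_ * ds.-1)%N]mulnC.
Qed.

Lemma sum_card_stages_le L ds n : (1 < ds)%N ->
  (\sum_(l < n) #|[set i : 'I_L | in_stage ds l i]| <= L)%N.
Proof.
move=> ds_gt1; under eq_bigr => l _ do rewrite card_set_sum.
rewrite exchange_big /= -[X in (_ <= X)%N]card_ord -sum1_card.
apply: leq_sum => i _; under eq_bigr => l _ do rewrite in_stageE //.
exact: sum_ord_eq_le1.
Qed.

Lemma encodedF_activations_le L N P ds : (1 < ds)%N ->
  (encodedF_activations L N P ds <= (2 * N + P) * nstages L ds + N * L)%N.
Proof.
move=> ds_gt1; rewrite /encodedF_activations.
rewrite (eq_bigr (fun l : 'I__ => N * #|[set i : 'I_L | in_stage ds l i]| + (2 * N + P)))%N;
  last by move=> l _; rewrite mul2n -addnn; ring.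
rewrite big_split /= sum_nat_const card_ord -big_distrr /= addnC mulnC.
by rewrite leq_add2l leq_mul2l sum_card_stages_le ?orbT.
Qed.

Local Open Scope ring_scope.

Lemma hdist_xx N (x : 'rV[F2]_N) : hdist x x = 0%N.
Proof. by apply: eq_card0 => v; rewrite !inE eqxx. Qed.

Lemma hdist_triangle N (x y z : 'rV[F2]_N) : (hdist x z <= hdist x y + hdist y z)%N.
Proof.
apply: leq_trans (leq_card_setU _ _); apply: subset_leq_card; apply/subsetP => v.
by rewrite !inE -negb_and; apply: contra => /andP[/eqP-> /eqP->].
Qed.

Definition stage_sum L K N ds (A : 'M[F2]_(L, K)) (G : 'M[F2]_(K, N)) (s : 'rV[F2]_L)
    (l : nat) : 'rV[F2]_N :=
  \row_j \sum_(i : 'I_L | in_stage ds l i) s 0 i * (A *m G) i j.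

Lemma hdist_add_step L K N ds (A : 'M[F2]_(L, K)) (G : 'M[F2]_(K, N)) s
    Dand fa Dadd fx l (x c : 'rV[F2]_N) :
  (hdist (add_step ds A G s Dand fa Dadd fx l x) (c + stage_sum ds A G s l)
   <= hdist x c + #|Dand| + #|Dadd|)%N.
Proof.
have sub : [set v | add_step ds A G s Dand fa Dadd fx l x 0 v
                    != (c + stage_sum ds A G s l) 0 v]
    \subset [set v | x 0 v != c 0 v] :|: Dand :|: Dadd.
  apply/subsetP => v; rewrite !inE !mxE /gate_out.
  case: (v \in Dadd); rewrite ?orbT //; case: (v \in Dand); rewrite ?orbT //= !orbF.
  by apply: contraNneq => ->.
apply: leq_trans (subset_leq_card sub) _.
by apply: leq_trans (leq_card_setU _ _) _; rewrite leq_add2r leq_card_setU.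
Qed.

Lemma hdist_pbf_step_noiseless P N dv dc (H : 'M[F2]_(P, N)) Dchk fx Dmaj fm r
    (x : 'rV[F2]_N) :
  (forall c : 'I_P, #|[set v : 'I_N | adj H c v]| = dc) ->
  (hdist (pbf_step H dv Dchk fx Dmaj fm r x) (pbf_noiseless H dv r x)
   <= #|Dmaj| + dc * #|Dchk|)%N.
Proof.
move=> check_deg.
have sub : [set v | pbf_step H dv Dchk fx Dmaj fm r x 0 v != pbf_noiseless H dv r x 0 v]
    \subset Dmaj :|: \bigcup_(c in Dchk) [set v | adj H c v].
  apply/subsetP => v; rewrite !inE /pbf_noiseless /pbf_step !mxE /gate_out in_set0.
  case: (v \in Dmaj) => //=; apply: contraR => /bigcupP no_faulty_check.
  suff -> : [set c | adj H c v && (check_val H Dchk fx x c != 0)] =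
            [set c | adj H c v && (check_val H set0 id x c != 0)] by [].
  apply/setP => c; rewrite !inE /check_val /gate_out in_set0.
  case adj_cv: (adj H c v) => //=; case faulty_c: (c \in Dchk) => //.
  by case: no_faulty_check; exists c; rewrite ?inE.
apply: leq_trans (subset_leq_card sub) _.
apply: leq_trans (leq_card_setU _ _) _; rewrite leq_add2l.
apply: leq_trans (card_bigcup_le _ _) _.
by rewrite (eq_bigr (fun=> dc)) // sum_nat_const mulnC.
Qed.

Lemma cond_A3_hdist (R : realFieldType) P N (H : 'M[F2]_(P, N)) dv (alpha0 theta : R)
    r (c x : 'rV[F2]_N) :
  cond_A3 H dv alpha0 theta -> codeword H c -> (hdist x c)%:R <= alpha0 * N%:R ->
  (hdist (pbf_noiseless H dv r x) c)%:R <= (1 - theta) * alpha0 * N%:R.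
Proof.
move=> A3 cw_c close; rewrite -[x](addrNK c) addrC; apply: A3 => //.
apply: le_trans close; rewrite ler_nat /hdist; apply: subset_leq_card.
by apply/subsetP => v; rewrite !inE !mxE subr_eq0.
Qed.

Definition partial_output L K N ds (A : 'M[F2]_(L, K)) (G : 'M[F2]_(K, N))
    (s : 'rV[F2]_L) (n : nat) : 'rV[F2]_N :=
  (\row_i (if (i < ds.-1 * n)%N then s 0 i else 0)) *m A *m G.

Section PartialOutput.

Variables (L K N ds : nat) (A : 'M[F2]_(L, K)) (G : 'M[F2]_(K, N)) (s : 'rV[F2]_L).

Lemma partial_output0 : partial_output ds A G s 0 = 0.
Proof.
rewrite /partial_output; have -> : \row_i (if (i < ds.-1 * 0)%N then s 0 i else 0) = 0.
  by apply/rowP => i; rewrite !mxE muln0.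
by rewrite !mul0mx.
Qed.

Lemma partial_outputS n :
  partial_output ds A G s n.+1 = partial_output ds A G s n + stage_sum ds A G s n.
Proof.
apply/rowP => j; rewrite /partial_output -!mulmxA !mxE.
rewrite (big_mkcond (fun i : 'I_L => in_stage ds n i)) -big_split /=.
apply: eq_bigr => i _; rewrite !mxE /in_stage.
have mono : (ds.-1 * n <= ds.-1 * n.+1)%N by rewrite leq_mul2l leqnSn orbT.
case: (ltnP i (ds.-1 * n)) => lt_n; case: (ltnP i (ds.-1 * n.+1)) => lt_Sn /=;
  rewrite ?mul0r ?add0r ?addr0 //.
by move: (leq_trans lt_n mono); rewrite ltnNge lt_Sn.
Qed.

Lemma partial_output_codeword P (H : 'M[F2]_(P, N)) n :
  G *m H^T = 0 -> codeword H (partial_output ds A G s n).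
Proof. by move=> GH; rewrite /codeword /partial_output -!mulmxA GH !mulmx0. Qed.

Lemma partial_output_nstages : (1 < ds)%N ->
  partial_output ds A G s (nstages L ds) = s *m A *m G.
Proof.
move=> ds_gt1; congr (_ *m _ *m _); apply/rowP => i; rewrite mxE.
suff -> : (i < ds.-1 * nstages L ds)%N by [].
have ds1_gt0 : (0 < ds.-1)%N by lia.
have := ltn_ord i; rewrite /nstages; have := divn_eq (L + ds.-2) ds.-1.
have := ltn_pmod (L + ds.-2) ds1_gt0; lia.
Qed.

End PartialOutput.

Section EncodedFInvariant.

Variables (R : realFieldType) (L K P N ds dv dc : nat) (alpha0 theta : R).
Variables (A : 'M[F2]_(L, K)) (G : 'M[F2]_(K, N)) (H : 'M[F2]_(P, N)) (s : 'rV[F2]_L).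
Variables (Dand Dadd Dmaj : {set 'I_N}) (Dchk : {set 'I_P}) (fa fx fm : F2 -> F2).
Variable r : nat -> 'I_N -> F2.

Hypothesis check_deg : forall c : 'I_P, #|[set v : 'I_N | adj H c v]| = dc.
Hypothesis GH : G *m H^T = 0.
Hypothesis A3 : cond_A3 H dv alpha0 theta.
Hypotheses (ds_gt1 : (1 < ds)%N) (alpha0_ge0 : 0 <= alpha0) (theta_le1 : theta <= 1).
Hypothesis budget :
  (#|Dand| + #|Dadd| + #|Dmaj| + dc * #|Dchk|)%:R <= theta * alpha0 * N%:R.

Let reg := encodedF_reg ds dv A G H s Dand fa Dadd Dchk fx Dmaj fm r.
Let target := partial_output ds A G s.

Lemma encodedF_reg_hdist n :
  (hdist (reg n) (target n))%:R
    <= (1 - theta) * alpha0 * N%:R + (#|Dmaj| + dc * #|Dchk|)%:R.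
Proof.
have decay_ge0 : 0 <= (1 - theta) * alpha0 * N%:R.
  by rewrite !mulr_ge0 // subr_ge0.
elim: n => [|n IH].
  by rewrite /reg /target /= partial_output0 hdist_xx addr_ge0.
rewrite /reg /target /= partial_outputS.
set x := add_step _ _ _ _ _ _ _ _ _ _.
set c := partial_output _ _ _ _ _ + _.
have cw_c : codeword H c by rewrite /c -partial_outputS; apply: partial_output_codeword.
have x_close : (hdist x c)%:R <= alpha0 * N%:R.
  apply: le_trans (_ : (hdist (reg n) (target n) + #|Dand| + #|Dadd|)%:R <= _).
    by rewrite ler_nat hdist_add_step.
  rewrite !natrD; move: IH budget; rewrite !natrD; lra.
apply: le_trans (_ : (hdist (pbf_noiseless H dv (r n) x) c
                       + (#|Dmaj| + dc * #|Dchk|))%:R <= _).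
  rewrite ler_nat; apply: leq_trans (hdist_triangle _ (pbf_noiseless H dv (r n) x) _) _.
  by rewrite [X in (_ <= X)%N]addnC leq_add2r hdist_pbf_step_noiseless.
by rewrite natrD lerD2r cond_A3_hdist.
Qed.

Lemma encodedF_output_hdist :
  (hdist (encodedF_output ds dv A G H s Dand fa Dadd Dchk fx Dmaj fm r) (s *m A *m G))%:R
    <= alpha0 * N%:R.
Proof.
rewrite /encodedF_output -(partial_output_nstages A G s ds_gt1).
apply: le_trans (encodedF_reg_hdist _) _; move: budget; rewrite !natrD.
have := ler0n R #|Dand|; have := ler0n R #|Dadd|; lra.
Qed.

End EncodedFInvariant.

Lemma defect_budget (R : realFieldType) (D N P ds dc na nx nc nm : nat)
    (alpha_and alpha_xor alpha_maj t : R) :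
  (0 < N)%N -> (1 < ds)%N -> (dc <= D)%N -> 0 <= alpha_and -> 0 <= alpha_xor ->
  na%:R <= alpha_and * N%:R -> nx%:R <= alpha_xor * N%:R ->
  nc%:R <= alpha_xor * P%:R -> nm%:R <= alpha_maj * N%:R ->
  (ds.-1)%:R * alpha_and + ((D%:R * (1 - (N%:R - P%:R) / N%:R) + 1) * alpha_xor)
    + alpha_maj < t ->
  (na + nx + nm + dc * nc)%:R <= t * N%:R.
Proof.
move=> N_gt0 ds_gt1 dc_le_D aa_ge0 ax_ge0 hna hnx hnc hnm budget_lt.
have Npos : (0 : R) < N%:R by rewrite ltr0n.
apply: le_trans (_ : ((ds.-1)%:R * alpha_and * N%:R + D%:R * (alpha_xor * P%:R)
                      + alpha_xor * N%:R + alpha_maj * N%:R) <= _).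
  have and_le : alpha_and * N%:R <= (ds.-1)%:R * alpha_and * N%:R.
    by rewrite -mulrA ler_peMl ?mulr_ge0 // ler1n; lia.
  have chk_le : (dc * nc)%:R <= D%:R * (alpha_xor * P%:R).
    by rewrite natrM; apply: ler_pM; rewrite ?ler_nat.
  by rewrite !natrD; lra.
rewrite -(ltr_pM2r Npos) in budget_lt; apply: le_trans (ltW budget_lt).
by rewrite le_eqVlt; apply/predU1P; left; field; rewrite gt_eqF.
Qed.

Theorem theorem2 (R : realFieldType) (D L K N P ds dv dc : nat)
  (alpha_and alpha_xor alpha_maj alpha0 theta : R)
  (A : 'M['F_2]_(L, K)) (G : 'M['F_2]_(K, N)) (H : 'M['F_2]_(P, N)) :
  (3 < D)%N -> (2 <= ds)%N -> (ds <= D)%N -> (dc <= D)%N ->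
  (0 < K)%N -> (K + P = N)%N ->
  regular_ldpc H dv dc -> generator_of H G -> systematic G ->
  0 < alpha0 < 1 -> 0 < theta < 1 -> cond_A3 H dv alpha0 theta ->
  0 <= alpha_and <= 1 -> 0 <= alpha_xor <= 1 -> 0 <= alpha_maj <= 1 ->
  (ds.-1)%:R * alpha_and
    + ((D%:R * (1 - (N%:R - P%:R) / N%:R) + 1) * alpha_xor) + alpha_maj
    < theta * alpha0 ->
  (* operations per output bit *)
  (encodedF_activations L N P ds)%:R / K%:R
    <= (2 * N + P)%N%:R / K%:R * (nstages L ds)%:R + (N * L)%N%:R / K%:R :> R
  /\
  (* error fraction of the output, for every input, defect placement,
     defect functions and tie-break outcome *)
  (forall (s : 'rV['F_2]_L)
          (Dand : {set 'I_N}) (Dadd : {set 'I_N}) (Dchk : {set 'I_P}) (Dmaj : {set 'I_N})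
          (fa fx fm : 'F_2 -> 'F_2) (r : nat -> 'I_N -> 'F_2),
     valid_defect fa -> valid_defect fx -> valid_defect fm ->
     #|Dand|%:R <= alpha_and * N%:R ->
     #|Dadd|%:R <= alpha_xor * N%:R ->
     #|Dchk|%:R <= alpha_xor * P%:R ->
     #|Dmaj|%:R <= alpha_maj * N%:R ->
     (hdist (encodedF_output ds dv A G H s Dand fa Dadd Dchk fx Dmaj fm r)
            (s *m A *m G))%:R
       <= alpha0 * N%:R).
Proof.
move=> _ ds_gt1 _ dc_le_D K_gt0 KPN [_ check_deg] [_ [GH _]] _ /andP[alpha0_gt0 _]
  /andP[_ theta_lt1] A3 /andP[aa_ge0 _] /andP[ax_ge0 _] _ budget_lt.
split.
  rewrite mulrAC -mulrDl ler_wpM2r ?invr_ge0 // -natrM -natrD ler_nat.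
  exact: encodedF_activations_le.
move=> s Dand Dadd Dchk Dmaj fa fx fm r _ _ _ hand hadd hchk hmaj.
have N_gt0 : (0 < N)%N by rewrite -KPN ltn_addr.
apply: (encodedF_output_hdist _ _ _ _ _ _ check_deg GH A3 ds_gt1 (ltW alpha0_gt0)
          (ltW theta_lt1)).
exact: defect_budget dc_le_D aa_ge0 ax_ge0 hand hadd hchk hmaj budget_lt.
Qed.
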